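(* Let $\eta_3=\int_1^\infty\frac{\mathrm{d}t}{\sqrt{t^6-1}}$ and let $\mathrm{cleafh}_3:(-\eta_3,\eta_3)\to\mathbb{R}$ be the hyperbolic leaf function of basis $3$. For every $l\in(-\eta_3,\eta_3)$, writing $C=\mathrm{cleafh}_3(l)$, $$\Bigl(\mathrm{cleafh}_3\Bigl(\frac l2\Bigr)\Bigr)^2=\frac{-1+C^2+\sqrt3\sqrt{1+C^2+C^4}}{4C^2+2}+\frac{\sqrt3\,C\sqrt{-3-6C^2+2\sqrt3\,(1+2C^2)\sqrt{1+C^2+C^4}}}{2(1+2C^2)^{3/2}}.$$
   Context: For a natural number $n$, let $\eta_n=\int_1^\infty\frac{\mathrm{d}t}{\sqrt{t^{2n}-1}}$. The hyperbolic leaf function $\mathrm{cleafh}_n$ is the solution $r(l)$ on $(-\eta_n,\eta_n)$ of $\frac{\mathrm{d}^2r}{\mathrm{d}l^2}=n\,r^{2n-1}$ with $r(0)=1$, $r'(0)=0$; it is even, and for $l\ge0$ it is the inverse of $r\mapsto\int_1^r\frac{\mathrm{d}t}{\sqrt{t^{2n}-1}}$, $r\ge1$. *)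

From Stdlib Require Import Reals.
From Coquelicot Require Import Coquelicot.
Open Scope R_scope.

Definition eta (n : nat) : R :=
  RInt_gen (fun t => / sqrt (t ^ (2 * n) - 1)) (at_right 1) (Rbar_locally p_infty).

Definition is_cleafh (n : nat) (r : R -> R) : Prop :=
  exists dr : R -> R,
    (forall l, - eta n < l < eta n ->
        is_derive r l (dr l) /\ is_derive dr l (INR n * r l ^ (2 * n - 1))) /\
    r 0 = 1 /\ dr 0 = 0.

(* Multiplying [r'' = 3 r^5] by [r'] gives the first integral [r'^2 = r^6 - 1], so
   [r >= 1] and [W = -1/r^2] solves the Weierstrass equation [W'^2 = 4 W^3 + 4]
   with [W 0 = -1], [W' 0 = 0]. The addition theorem for [W] follows from the
   vanishing derivative of [t |-> F (W t, W (l - t), W' t, W' (l - t))] for a rational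
   [F]; comparing [t = 0] with [t = l/2] gives the duplication formula
   [C^2 (-8 X^4 + 8 X^3 + 8 X + 1) = (2 X^2 + 2 X - 1)^2] for [X = r (l/2)^2].
   Over [Q(z)], [z = sqrt (3 (1 + C^2 + C^4))], this quartic in [X] splits into two
   quadratics, one of which has no real root; the other has a single root [X >= 1],
   which is the closed form. *)
From Stdlib Require Import Reals Lra Lia Psatz.
From Coquelicot Require Import Coquelicot.
Open Scope R_scope.

Ltac rewrite_Derive H :=
  match type of H with
  | is_derive ?f ?x ?v => rewrite (is_derive_unique (fun y : R => f y) x v H)
  end.

Lemma is_derive_0_eq (f : R -> R) (a b : R) :
  (forall x, Rmin a b <= x <= Rmax a b -> is_derive f x 0) -> f a = f b.
Proof.
  intros Hf.
  destruct (MVT_gen f a b (fun _ => 0)) as [c [_ Hc]].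
  - intros x Hx; apply Hf; lra.
  - intros x Hx; apply continuity_pt_filterlim, (ex_derive_continuous f).
    exists 0; apply Hf; exact Hx.
  - lra.
Qed.

Lemma continuity_pt_pos_of_neq0 (f : R -> R) (a b : R) :
  (forall x, Rmin a b <= x <= Rmax a b -> continuity_pt f x /\ f x <> 0) ->
  0 < f a -> 0 < f b.
Proof.
  intros Hf Ha.
  assert (Hseg : forall x, a <= x <= b \/ b <= x <= a -> continuity_pt f x /\ f x <> 0).
  { intros x Hx; apply Hf; unfold Rmin, Rmax; destruct Rle_dec; lra. }
  assert (Hb0 : f b <> 0) by (apply Hseg; lra).
  destruct (Rtotal_order 0 (f b)) as [Hb | [Hb | Hb]]; [exact Hb | lra | exfalso].
  destruct (Rtotal_order a b) as [Hab | [Hab | Hab]].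
  - destruct (Ranalysis5.IVT_interv (fun x => - f x) a b) as [c [Hc Hfc]]; try lra.
    + intros x Hx; apply continuity_pt_opp, Hseg; lra.
    + apply (Hseg c); lra.
  - subst; lra.
  - destruct (Ranalysis5.IVT_interv f b a) as [c [Hc Hfc]]; try lra.
    + intros x Hx; apply Hseg; lra.
    + apply (Hseg c); [lra | exact Hfc].
Qed.

Lemma between_0_in_interval (e x y : R) :
  - e < x < e -> Rmin 0 x <= y <= Rmax 0 x -> - e < y < e.
Proof. intros Hx; unfold Rmin, Rmax; destruct Rle_dec; lra. Qed.

Section LeafEquation.

Variables (n : nat) (e : R) (r dr : R -> R).
Hypothesis leaf_derive : forall x, - e < x < e ->
  is_derive r x (dr x) /\ is_derive dr x (INR n * r x ^ (2 * n - 1)).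
Hypothesis leaf_r0 : r 0 = 1.
Hypothesis leaf_dr0 : dr 0 = 0.

Lemma leaf_energy (x : R) : - e < x < e -> dr x ^ 2 = r x ^ (2 * n) - 1.
Proof.
  intros Hx.
  assert (Hconst : dr 0 ^ 2 - r 0 ^ (2 * n) = dr x ^ 2 - r x ^ (2 * n)).
  { apply (is_derive_0_eq (fun y => dr y ^ 2 - r y ^ (2 * n))); intros y Hy.
    destruct (leaf_derive y (between_0_in_interval e x y Hx Hy)) as [Hr Hdr].
    auto_derive; [repeat split; eexists; eauto |].
    rewrite_Derive Hr; rewrite_Derive Hdr.
    replace (Init.Nat.pred (n + (n + 0))) with (2 * n - 1)%nat by lia.
    rewrite !plus_INR; simpl; ring. }
  rewrite leaf_r0, leaf_dr0, pow1 in Hconst; lra.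
Qed.

Lemma leaf_ge_1 (x : R) : (0 < n)%nat -> - e < x < e -> 1 <= r x.
Proof.
  intros Hn Hx.
  assert (Hsq : forall y, - e < y < e -> 1 <= r y ^ 2).
  { intros y Hy; destruct (Rlt_le_dec (r y ^ 2) 1) as [Hlt | Hle]; [exfalso | exact Hle].
    assert (Hpow := pow_lt_1_compat (r y ^ 2) n (conj (pow2_ge_0 _) Hlt) Hn).
    rewrite <- pow_mult in Hpow; pose proof (leaf_energy y Hy); nra. }
  assert (Hpos : 0 < r x).
  { apply (continuity_pt_pos_of_neq0 r 0); [| lra].
    intros y Hy; pose proof (between_0_in_interval e x y Hx Hy) as Hy'; split.
    - apply continuity_pt_filterlim, (ex_derive_continuous r).
      exists (dr y); apply leaf_derive, Hy'.
    - intros Hr0; pose proof (Hsq y Hy'); rewrite Hr0 in *; simpl in *; lra. }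
  pose proof (Hsq x Hx); nra.
Qed.

End LeafEquation.

(* Addition law of [W x = wp (x + w)], where [wp] is the Weierstrass function with
   [wp'^2 = 4 wp^3 + 4] and [w] its real half period, [wp w = -1]:
   [W (x + y) = wp_add (W x) (W y) (W' x) (W' y)]. *)
Definition wp_add (a b p q : R) : R :=
  -1 + 3 * (2 * a * b * (a + b) + 4 + 2 * (a - b) ^ 2 + p * q)
       / (2 * (a * b + a + b - 2) ^ 2).

Lemma wp_add_base (b q : R) : wp_add (-1) b 0 q = b.
Proof. unfold wp_add; replace (-1 * b + -1 + b - 2) with (-3) by ring; field. Qed.

Lemma wp_add_denom_neq0 (a b : R) :
  -1 <= a <= 0 -> -1 <= b <= 0 -> a * b + a + b - 2 <> 0.
Proof.
  intros Ha Hb.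
  assert (0 <= (a + 1) * (b + 1) <= 1) by (split; [apply Rmult_le_pos | nra]; lra).
  nra.
Qed.

Section WeierstrassEquation.

Variables (e : R) (W DW : R -> R).
Hypothesis wp_derive : forall x, - e < x < e ->
  is_derive W x (DW x) /\ is_derive DW x (6 * W x ^ 2).
Hypothesis wp_energy : forall x, - e < x < e -> DW x ^ 2 = 4 * W x ^ 3 + 4.
Hypothesis wp_nonpos : forall x, - e < x < e -> W x <= 0.
Hypothesis wp_W0 : W 0 = -1.

Lemma wp_range (x : R) : - e < x < e -> -1 <= W x <= 0.
Proof.
  intros Hx; split; [| exact (wp_nonpos x Hx)].
  pose proof (wp_energy x Hx); pose proof (pow2_ge_0 (DW x)).
  assert (0 <= (W x + 1) * ((W x - 1/2) ^ 2 + 3/4)) by nra.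
  assert (0 < (W x - 1/2) ^ 2 + 3/4) by nra.
  nra.
Qed.

Lemma wp_add_derive_0 (s t : R) : - e < t < e -> - e < s - t < e ->
  is_derive (fun y => wp_add (W y) (W (s - y)) (DW y) (DW (s - y))) t 0.
Proof.
  intros Ht Hst.
  destruct (wp_derive t Ht) as [Ha Hp]; destruct (wp_derive (s - t) Hst) as [Hb Hq].
  assert (HM := wp_add_denom_neq0 _ _ (wp_range t Ht) (wp_range (s - t) Hst)).
  (* The derivative is a combination of the defects of the first integral at [t] and [s - t]. *)
  unfold wp_add; auto_derive; replace (s + - t) with (s - t) by ring.
  - repeat split; try (eexists; eassumption); intros H0; apply HM; nra.
  - rewrite_Derive Ha; rewrite_Derive Hp; rewrite_Derive Hb; rewrite_Derive Hq.
    transitivity (3/2 * (- 2 * (W (s - t) + 1) * DW (s - t) * (DW t ^ 2 - (4 * W t ^ 3 + 4))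
      + 2 * (W t + 1) * DW t * (DW (s - t) ^ 2 - (4 * W (s - t) ^ 3 + 4)))
      / (W t * W (s - t) + W t + W (s - t) - 2) ^ 3); [field; exact HM |].
    rewrite (wp_energy t Ht), (wp_energy (s - t) Hst); field; exact HM.
Qed.

Lemma wp_addition (s t : R) : - e < s < e -> Rmin 0 s <= t <= Rmax 0 s ->
  wp_add (W t) (W (s - t)) (DW t) (DW (s - t)) = W s.
Proof.
  intros Hs Ht.
  assert (HDW0 : DW 0 = 0).
  { assert (H0 : DW 0 ^ 2 = 0) by (rewrite wp_energy, wp_W0; [ring | lra]).
    nra. }
  set (F := fun y => wp_add (W y) (W (s - y)) (DW y) (DW (s - y))).
  change (F t = W s); transitivity (F 0).
  - symmetry; apply (is_derive_0_eq F); intros y Hy.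
    assert (Hy' : Rmin 0 s <= y <= Rmax 0 s)
      by (revert Ht Hy; unfold Rmin, Rmax; repeat destruct Rle_dec; lra).
    apply wp_add_derive_0; apply (between_0_in_interval e s); [exact Hs | exact Hy' | exact Hs |].
    revert Hy'; unfold Rmin, Rmax; destruct Rle_dec; lra.
  - unfold F; rewrite Rminus_0_r, wp_W0, HDW0; apply wp_add_base.
Qed.

Lemma wp_duplication (s : R) : - e < s < e ->
  W s = -1 + 12 * (W (s / 2) ^ 3 + 1) / (W (s / 2) ^ 2 + 2 * W (s / 2) - 2) ^ 2.
Proof.
  intros Hs.
  assert (Hh : - e < s / 2 < e) by lra.
  rewrite <- (wp_addition s (s / 2)) by (try exact Hs; unfold Rmin, Rmax; destruct Rle_dec; lra).
  replace (s - s / 2) with (s / 2) by field.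
  assert (HM := wp_add_denom_neq0 _ _ (wp_range _ Hh) (wp_range _ Hh)).
  unfold wp_add; replace (DW (s / 2) * DW (s / 2)) with (DW (s / 2) ^ 2) by ring.
  rewrite (wp_energy _ Hh); field.
  intros H0; apply HM; rewrite <- H0; ring.
Qed.

End WeierstrassEquation.

Section LeafEquationBasis3.

Variables (e : R) (r dr : R -> R).
Hypothesis leaf3_derive : forall x, - e < x < e ->
  is_derive r x (dr x) /\ is_derive dr x (INR 3 * r x ^ (2 * 3 - 1)).
Hypothesis leaf3_r0 : r 0 = 1.
Hypothesis leaf3_dr0 : dr 0 = 0.

Let W (y : R) : R := - / r y ^ 2.
Let DW (y : R) : R := 2 * dr y / r y ^ 3.

Lemma leaf3_ge_1 (x : R) : - e < x < e -> 1 <= r x.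
Proof. apply (leaf_ge_1 3 e r dr); auto. Qed.

Lemma leaf3_energy (x : R) : - e < x < e -> dr x ^ 2 = r x ^ 6 - 1.
Proof. exact (leaf_energy 3 e r dr leaf3_derive leaf3_r0 leaf3_dr0 x). Qed.

Lemma leaf3_wp_derive (x : R) : - e < x < e ->
  is_derive W x (DW x) /\ is_derive DW x (6 * W x ^ 2).
Proof.
  intros Hx.
  destruct (leaf3_derive x Hx) as [Hr Hdr].
  assert (Hr0 : r x <> 0) by (pose proof (leaf3_ge_1 x Hx); lra).
  unfold W, DW; split; auto_derive;
    try (repeat split; try (eexists; eassumption);
         repeat apply Rmult_integral_contrapositive_currified; auto with real).
  - rewrite_Derive Hr; field; exact Hr0.
  - rewrite_Derive Hr; rewrite_Derive Hdr.
    transitivity (6 * (- / r x ^ 2) ^ 2 - 6 / r x ^ 4 * (dr x ^ 2 - (r x ^ 6 - 1)));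
      [simpl; field; exact Hr0 |].
    rewrite (leaf3_energy x Hx); ring.
Qed.

Lemma leaf3_wp_energy (x : R) : - e < x < e -> DW x ^ 2 = 4 * W x ^ 3 + 4.
Proof.
  intros Hx.
  assert (Hr0 : r x <> 0) by (pose proof (leaf3_ge_1 x Hx); lra).
  unfold W, DW; transitivity (4 * dr x ^ 2 / r x ^ 6); [field; exact Hr0 |].
  rewrite (leaf3_energy x Hx); field; exact Hr0.
Qed.

Lemma cleafh3_duplication (l : R) : - e < l < e ->
  let X := r (l / 2) ^ 2 in
  (2 * X ^ 2 + 2 * X - 1) ^ 2 = r l ^ 2 * (-8 * X ^ 4 + 8 * X ^ 3 + 8 * X + 1).
Proof.
  intros Hl X.
  assert (HX : 1 <= X) by (pose proof (leaf3_ge_1 (l / 2) ltac:(lra)); unfold X; nra).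
  assert (HC : 1 <= r l ^ 2) by (pose proof (leaf3_ge_1 l Hl); nra).
  assert (Hdup : W l = -1 + 12 * (W (l / 2) ^ 3 + 1) / (W (l / 2) ^ 2 + 2 * W (l / 2) - 2) ^ 2).
  { apply (wp_duplication e W DW leaf3_wp_derive leaf3_wp_energy); [| | exact Hl].
    - intros x Hx; pose proof (leaf3_ge_1 x Hx).
      assert (0 < / r x ^ 2) by (apply Rinv_0_lt_compat; nra).
      unfold W; lra.
    - unfold W; rewrite leaf3_r0; field. }
  unfold W in Hdup; fold X in Hdup.
  assert (Hinv : / r l ^ 2 = (-8 * X ^ 4 + 8 * X ^ 3 + 8 * X + 1) / (2 * X ^ 2 + 2 * X - 1) ^ 2).
  { replace (/ r l ^ 2) with (- (- / r l ^ 2)) by ring.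
    rewrite Hdup; field; repeat split; nra. }
  assert (HQ : -8 * X ^ 4 + 8 * X ^ 3 + 8 * X + 1 = (2 * X ^ 2 + 2 * X - 1) ^ 2 * / r l ^ 2)
    by (rewrite Hinv; field; nra).
  rewrite HQ; field; nra.
Qed.

End LeafEquationBasis3.

Lemma Rpower_3_2 (u : R) : 0 < u -> Rpower u (3 / 2) = u * sqrt u.
Proof.
  intros Hu; replace (3 / 2) with (1 + / 2) by field.
  rewrite Rpower_plus, Rpower_1, Rpower_sqrt by exact Hu; reflexivity.
Qed.

(* The two factors are conjugate under [z |-> - z], so their product only involves [z ^ 2]. *)
Lemma quartic_factor (C X z : R) : z ^ 2 = 3 * (1 + C ^ 2 + C ^ 4) ->
  let u := 1 + 2 * C ^ 2 in
  let a := 2 * u * X - C ^ 2 + 1 in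
  4 * u ^ 3 * ((2 * X ^ 2 + 2 * X - 1) ^ 2 - C ^ 2 * (-8 * X ^ 4 + 8 * X ^ 3 + 8 * X + 1))
  = ((a - z) ^ 2 - 3 * C ^ 2 * (2 * z - 3)) * ((a + z) ^ 2 + 3 * C ^ 2 * (2 * z + 3)).
Proof.
  intros Hz u a.
  transitivity ((a ^ 2 + z ^ 2 + 9 * C ^ 2) ^ 2 - (2 * a + 6 * C ^ 2) ^ 2 * z ^ 2);
    [rewrite Hz; unfold a, u; ring | ring].
Qed.

Lemma quartic_root (C X z : R) :
  1 <= C -> 1 <= X -> 0 <= z -> z ^ 2 = 3 * (1 + C ^ 2 + C ^ 4) ->
  (2 * X ^ 2 + 2 * X - 1) ^ 2 = C ^ 2 * (-8 * X ^ 4 + 8 * X ^ 3 + 8 * X + 1) ->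
  X = (C ^ 2 - 1 + z + sqrt 3 * C * sqrt (2 * z - 3)) / (2 * (1 + 2 * C ^ 2)).
Proof.
  intros HC HX Hz0 Hz Hquartic.
  pose proof (quartic_factor C X z Hz) as Hfactor; cbv zeta in Hfactor.
  set (u := 1 + 2 * C ^ 2) in *; set (a := 2 * u * X - C ^ 2 + 1) in *.
  assert (HC2 : 1 <= C ^ 2) by nra.
  assert (Hz3 : 3 <= z) by (assert (1 <= C ^ 4) by nra; nra).
  assert (Hconj : 0 < (a + z) ^ 2 + 3 * C ^ 2 * (2 * z + 3)).
  { assert (0 < C ^ 2 * (2 * z + 3)) by (apply Rmult_lt_0_compat; lra).
    pose proof (pow2_ge_0 (a + z)); lra. }
  assert (Hsq : (a - z) ^ 2 = 3 * C ^ 2 * (2 * z - 3)).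
  { rewrite Hquartic, Rminus_diag, Rmult_0_r in Hfactor.
    destruct (Rmult_integral _ _ (eq_sym Hfactor)); lra. }
  assert (Hza : z <= a).
  { assert (z <= 3 + 3 * C ^ 2) by nra.
    assert (0 <= u * (X - 1)) by (apply Rmult_le_pos; unfold u; lra).
    unfold a; unfold u in *; lra. }
  assert (Hroot : a - z = sqrt 3 * C * sqrt (2 * z - 3)).
  { rewrite <- (sqrt_pow2 (a - z)), Hsq by lra.
    rewrite !sqrt_mult_alt, sqrt_pow2 by nra; ring. }
  rewrite <- Hroot; unfold a, u; field; nra.
Qed.

Lemma closed_form_eq (C : R) :
  (-1 + C ^ 2 + sqrt 3 * sqrt (1 + C ^ 2 + C ^ 4)) / (4 * C ^ 2 + 2)
  + sqrt 3 * C
      * sqrt (-3 - 6 * C ^ 2 + 2 * sqrt 3 * (1 + 2 * C ^ 2) * sqrt (1 + C ^ 2 + C ^ 4))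
    / (2 * Rpower (1 + 2 * C ^ 2) (3 / 2))
  = let z := sqrt (3 * (1 + C ^ 2 + C ^ 4)) in
    (C ^ 2 - 1 + z + sqrt 3 * C * sqrt (2 * z - 3)) / (2 * (1 + 2 * C ^ 2)).
Proof.
  cbv zeta; set (z := sqrt (3 * (1 + C ^ 2 + C ^ 4))).
  assert (Hu : 0 < 1 + 2 * C ^ 2) by nra.
  assert (Hz : sqrt 3 * sqrt (1 + C ^ 2 + C ^ 4) = z) by (unfold z; rewrite sqrt_mult_alt; lra).
  replace (-3 - 6 * C ^ 2 + 2 * sqrt 3 * (1 + 2 * C ^ 2) * sqrt (1 + C ^ 2 + C ^ 4))
    with ((1 + 2 * C ^ 2) * (2 * z - 3)) by (rewrite <- Hz; ring).
  rewrite Hz, Rpower_3_2, sqrt_mult_alt by lra.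
  assert (0 < sqrt (1 + 2 * C ^ 2)) by (apply sqrt_lt_R0; exact Hu).
  field; lra.
Qed.

Theorem mainTheorem17 (r : R -> R) (Hr : is_cleafh 3 r) (l : R)
  (Hl : - eta 3 < l < eta 3) :
  let C := r l in
  (r (l / 2)) ^ 2 =
    (-1 + C ^ 2 + sqrt 3 * sqrt (1 + C ^ 2 + C ^ 4)) / (4 * C ^ 2 + 2)
    + sqrt 3 * C
        * sqrt (-3 - 6 * C ^ 2 + 2 * sqrt 3 * (1 + 2 * C ^ 2) * sqrt (1 + C ^ 2 + C ^ 4))
      / (2 * Rpower (1 + 2 * C ^ 2) (3 / 2)).
Proof.
  intros C.
  destruct Hr as [dr [Hderive [Hr0 Hdr0]]].
  pose proof (leaf3_ge_1 _ r dr Hderive Hr0 Hdr0 l Hl) as HC.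
  assert (HX : 1 <= r (l / 2) ^ 2).
  { pose proof (leaf3_ge_1 _ r dr Hderive Hr0 Hdr0 (l / 2) ltac:(lra)); nra. }
  rewrite closed_form_eq; apply quartic_root.
  - exact HC.
  - exact HX.
  - apply sqrt_pos.
  - apply pow2_sqrt; nra.
  - exact (cleafh3_duplication _ r dr Hderive Hr0 Hdr0 l Hl).
Qed.
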